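(* Let $n \geq 2$ be an integer, let $p(x) \in \mathcal{T}_n$, and let $q(x) \in \mathcal{J}(p(x))$. Then $q(x) = \gcd(p(x), p'(x)) \cdot f(x)$ for some monic real-rooted integer polynomial $f(x)$ that interlaces $\mathrm{Min}(p,x)$.
   Context: A nonzero real polynomial is real-rooted if all its complex roots are real. For $n\ge1$, a Seidel trace polynomial of degree $n$ is a real-rooted polynomial $p(x)=\sum_{i=0}^n a_i x^{n-i}\in\mathbb{Z}[x]$ of degree $n$ with $a_0=1$, $a_1=0$, and $a_2=-\binom{n}{2}$ if $n\ge2$; $\mathcal{T}_n$ is the set of these. For real-rooted $p,q$ with $\deg p = m$, $\deg q = m-1$, roots $\lambda_1\le\dots\le\lambda_m$ of $p$ and $\mu_1\le\dots\le\mu_{m-1}$ of $q$, we say $q$ interlaces $p$ if $\lambda_i \le \mu_i \le \lambda_{i+1}$ for all $i\in\{1,\dots,m-1\}$. For $p\in\mathcal{T}_n$, $\mathcal{J}(p(x))$ is the set of integer polynomials $q(x)$ of degree $n-1$ with $q\in\mathcal{T}_{n-1}$ and $q$ interlacing $p$. Here $\gcd(p(x),p'(x))$ is the monic gcd, and $\mathrm{Min}(p,x) := p(x)/\gcd(p(x),p'(x))$, which is monic with simple roots, the same set of roots as $p$. *)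

From HB Require Import structures.
From mathcomp Require Import all_boot all_order all_algebra all_field.
Set Implicit Arguments. Unset Strict Implicit. Unset Printing Implicit Defensive.
Import Order.TTheory GRing.Theory Num.Theory.
Local Open Scope ring_scope.

Definition toC (p : {poly int}) : {poly algC} := map_poly (fun z : int => z%:~R) p.

Definition real_rooted (p : {poly algC}) : Prop :=
  p != 0 /\ forall z : algC, root p z -> z \is Num.real.

Definition sorted_roots (p : {poly algC}) (s : seq algC) : Prop :=
  all (fun z => z \is Num.real) s /\ sorted <=%R s /\
  p = lead_coef p *: \prod_(z <- s) ('X - z%:P).

Definition interlaces (q p : {poly algC}) : Prop :=
  real_rooted p /\ real_rooted q /\ (size q).+1 = size p /\
  exists (ls ms : seq algC), sorted_roots p ls /\ sorted_roots q ms /\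
    forall i : nat, (i < size ms)%N -> ls`_i <= ms`_i /\ ms`_i <= ls`_i.+1.

(* Seidel trace polynomials of degree n: p = sum_i a_i x^(n-i), integer,
   monic (a_0 = 1), a_1 = 0, a_2 = -C(n,2) if n >= 2, real-rooted. *)
Definition seidel_trace (n : nat) (p : {poly int}) : Prop :=
  (1 <= n)%N /\ size p = n.+1 /\ p`_n = 1 /\ p`_n.-1 = 0 /\
  ((2 <= n)%N -> p`_(n.-2) = - ('C(n, 2))%:Z) /\ real_rooted (toC p).

Definition J_set (n : nat) (p q : {poly int}) : Prop :=
  seidel_trace n.-1 q /\ interlaces (toC q) (toC p).

Definition mgcd (p q : {poly algC}) : {poly algC} :=
  (lead_coef (gcdp p q))^-1 *: gcdp p q.

Definition Minp (p : {poly algC}) : {poly algC} := p %/ mgcd p p^`().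

From HB Require Import structures.
From mathcomp Require Import all_boot all_order all_algebra all_field.
From mathcomp Require Import ring.
Set Implicit Arguments. Unset Strict Implicit. Unset Printing Implicit Defensive.
Import Order.TTheory GRing.Theory Num.Theory.

(* Write l_1 <= ... <= l_n for the roots of p and m_1 <= ... <= m_(n-1) for those
   of q.  Whenever l_i = l_(i+1), interlacing pinches m_i = l_i.  In characteristic 0
   a root of multiplicity k of p has multiplicity k - 1 in p', so the pinched m_i are
   exactly the roots of gcd(p, p') with multiplicity.  Removing them from q leaves f,
   removing the repeated l_i from p leaves Min(p, x), and the surviving roots still
   interlace.  Finally f has integer coefficients by Gauss's lemma, being the cofactor
   of the monic rational polynomial gcd(p, p') in the integer polynomial q. *)

Section Interlacing.
Variables (disp : Order.disp_t) (T : porderType disp).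
Implicit Types (x : T) (ls ms s : seq T).
Local Open Scope order_scope.

Fixpoint interlacing ls ms : bool :=
  match ls, ms with
  | [:: _], [::] => true
  | l :: ((l' :: _) as ls'), m :: ms' => [&& l <= m, m <= l' & interlacing ls' ms']
  | _, _ => false
  end.

#[global] Arguments interlacing : simpl nomatch.

(* For sorted [ls], [l \in ls'] means l_i = l_(i+1), which pinches m_i = l_i. *)
Fixpoint pinched ls ms : seq T :=
  match ls, ms with
  | l :: ls', m :: ms' => if l \in ls' then m :: pinched ls' ms' else pinched ls' ms'
  | _, _ => [::]
  end.

Fixpoint unpinched ls ms : seq T :=
  match ls, ms with
  | l :: ls', m :: ms' => if l \in ls' then unpinched ls' ms' else m :: unpinched ls' ms'
  | _, _ => ms
  end.

Lemma interlacingP x0 ls ms :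
  reflect (size ls = (size ms).+1 /\
           forall i, (i < size ms)%N -> nth x0 ls i <= nth x0 ms i <= nth x0 ls i.+1)
          (interlacing ls ms).
Proof.
elim: ms ls => [|m ms IH] [|l [|l' ls]] /=; try by constructor; case.
  by constructor; split.
apply: (iffP and3P) => [[lm ml' /IH [/= sz H]]|[[sz] H]].
  by split=> [|[|i]]; rewrite ?sz ?lm //; apply: H.
have /andP[lm ml'] := H 0%N isT.
by split=> //; apply/IH; split=> [|i]; [rewrite /= sz | apply: (H i.+1)].
Qed.

Lemma interlacing_sorted ls ms : interlacing ls ms -> sorted <=%O ls /\ sorted <=%O ms.
Proof.
elim: ms ls => [|m ms IH] [|l [|l' ls]] //= /and3P[lm ml' il].
have [sl sm] := IH _ il; split; first by rewrite /= (le_trans lm ml').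
case: ms sm il {IH} => // m' ms sm; case: ls sl => // l'' ls _ /and3P[l'm' _ _].
by rewrite /= (le_trans ml' l'm').
Qed.

Lemma sorted_mem_head x s : sorted <=%O (x :: s) -> x \in s -> x = head x s.
Proof.
case: s => // y s /= /andP[xy]; rewrite (path_sortedE le_trans) => /andP[/allP ys _].
by rewrite inE => /predU1P[// | /ys yx]; apply/le_anti; rewrite xy yx.
Qed.

Lemma sorted_undup_cons x s : sorted <=%O (x :: s) -> exists t, undup (x :: s) = x :: t.
Proof.
elim: s x => [|y s IH] x sxs; first by exists [::].
rewrite [undup _]/=; case: ifP => [/(sorted_mem_head sxs) /= ->|_]; last by eexists.
by apply: IH; apply: path_sorted sxs.
Qed.

Lemma perm_pinched ls ms : perm_eq ms (pinched ls ms ++ unpinched ls ms).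
Proof.
elim: ls ms => [|l ls IH] [|m ms] //=; case: ifP => _; rewrite ?perm_cons //.
by rewrite perm_sym -cat1s perm_catCA perm_cons perm_sym.
Qed.

Lemma perm_pinched_undup ls ms : interlacing ls ms -> perm_eq ls (pinched ls ms ++ undup ls).
Proof.
elim: ms ls => [|m ms IH] [|l [|l' ls]] // ils.
have [sl _] := interlacing_sorted ils; move: ils => /= /and3P[lm ml' il].
case: ifP => [/(sorted_mem_head sl) /= Dl | _].
  have -> : m = l by apply/le_anti; rewrite lm andbT Dl.
  by rewrite perm_cons IH.
by rewrite perm_sym -cat1s perm_catCA perm_cons perm_sym IH.
Qed.

Lemma interlacing_undup ls ms : interlacing ls ms -> interlacing (undup ls) (unpinched ls ms).
Proof.
elim: ms ls => [|m ms IH] [|l [|l' ls]] // ils.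
have [/path_sorted sl _] := interlacing_sorted ils; move: ils => /= /and3P[lm ml' /IH il].
case: ifP => // _; have [t Dt] := sorted_undup_cons sl; rewrite Dt in il.
by rewrite -/(undup (l' :: ls)) -/(unpinched (l' :: ls) ms) Dt /= lm ml'.
Qed.

End Interlacing.

Local Open Scope ring_scope.

Lemma mup_gcdp (F : fieldType) x (a b : {poly F}) : a != 0 -> b != 0 ->
  mup x (gcdp a b) = minn (mup x a) (mup x b).
Proof.
move=> a0 b0; have g0 : gcdp a b != 0 by rewrite gcdp_eq0 negb_and a0.
apply/eqP; rewrite eqn_leq leq_min !mup_geq // -dvdp_gcd -mup_geq // leqnn /=.
by rewrite dvdp_gcd -!mup_geq // geq_minl geq_minr.
Qed.

Lemma mup_deriv (F : numFieldType) x (p : {poly F}) : p != 0 -> root p x ->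
  p^`() != 0 /\ mup x p^`() = (mup x p).-1.
Proof.
move=> p0 px; have [[|m] [r]] := multiplicity_XsubC p x; rewrite p0 /= => rx Dp.
  by rewrite Dp expr0 mulr1 (negPf rx) in px.
pose h := r^`() * ('X - x%:P) + r * m.+1%:R%:P.
have Dp' : p^`() = h * ('X - x%:P) ^+ m.
  by rewrite Dp derivM deriv_exp derivXsubC mul1r /h polyC_natr exprS -mulr_natr; ring.
have hx : ~~ root h x by rewrite /root !hornerE subrr mulr0 add0r mulf_neq0 ?pnatr_eq0.
have h0 : h != 0 by apply: contraNneq hx => ->; rewrite root0.
split; first by rewrite Dp' mulf_neq0 // expf_neq0 // polyXsubC_eq0.
by rewrite Dp' Dp !mupMr // !mup_XsubCX eqxx.
Qed.

Lemma eqp_mup (F : closedFieldType) (a b : {poly F}) : a != 0 -> b != 0 ->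
  (forall x, mup x a = mup x b) -> a %= b.
Proof.
move=> a0 b0 mup_ab.
have mupE (p : {poly F}) s : p != 0 -> p = lead_coef p *: \prod_(z <- s) ('X - z%:P) ->
    forall x, mup x p = count_mem x s.
  move=> p0 Dp x; rewrite Dp -mul_polyC mupMr ?mu_prod_XsubC // rootC.
  by rewrite lead_coef_eq0.
have [s Da] := closed_field_poly_normal a; have [t Db] := closed_field_poly_normal b.
have st : perm_eq s t.
  by apply/allP => x _ /=; rewrite -(mupE a) // -(mupE b) // mup_ab.
rewrite Da Db (perm_big _ st) /=.
apply: (eqp_trans (eqp_scale _ _)); first by rewrite lead_coef_eq0.
by rewrite eqp_sym eqp_scale // lead_coef_eq0.
Qed.

Lemma mgcd_monic (a b : {poly algC}) : a != 0 -> mgcd a b \is monic.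
Proof. by move=> a0; rewrite monicE lead_coefZ mulVf // lead_coef_eq0 gcdp_eq0 negb_and a0. Qed.

Lemma mgcd_prod_XsubC (s gs : seq algC) : perm_eq s (gs ++ undup s) ->
  mgcd (\prod_(z <- s) ('X - z%:P)) (\prod_(z <- s) ('X - z%:P))^`() =
  \prod_(z <- gs) ('X - z%:P).
Proof.
have [-> /perm_size | [y sy] perm_s] : s = [::] \/ exists y, y \in s.
- by case: s => [|y s]; [left | right; exists y; rewrite mem_head].
- by case: gs => // _; rewrite !big_nil derivC /mgcd gcdp0 lead_coef1 invr1 scale1r.
set P := \prod_(z <- s) _; have P0 : P != 0 by rewrite monic_neq0 ?monic_prod_XsubC.
have rootP x : x \in s -> root P x by rewrite root_prod_XsubC.
have [P'0 _] := mup_deriv P0 (rootP y sy).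
have count_s x : count_mem x s = (count_mem x gs + (x \in s))%N.
  by rewrite (permP perm_s) count_cat (count_uniq_mem _ (undup_uniq s)) mem_undup.
apply/eqP; rewrite -eqp_monic ?mgcd_monic ?monic_prod_XsubC //.
have g0 : gcdp P P^`() != 0 by rewrite gcdp_eq0 negb_and P0.
apply: eqp_trans (eqp_scale _ _) _; first by rewrite invr_eq0 lead_coef_eq0.
apply: eqp_mup => // [|x]; first by rewrite monic_neq0 ?monic_prod_XsubC.
rewrite mup_gcdp // !mu_prod_XsubC; have [xs | xNs] := boolP (x \in s).
  have [_ ->] := mup_deriv P0 (rootP x xs).
  by rewrite mu_prod_XsubC count_s xs addn1; apply/minn_idPr.
by have := count_s x; rewrite (count_memPn xNs) (negPf xNs) addn0 => <-; rewrite min0n.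
Qed.

Lemma Minp_prod_XsubC (s gs : seq algC) : perm_eq s (gs ++ undup s) ->
  Minp (\prod_(z <- s) ('X - z%:P)) = \prod_(z <- undup s) ('X - z%:P).
Proof.
move=> perm_s; rewrite /Minp (mgcd_prod_XsubC perm_s) {1}(perm_big _ perm_s) big_cat /=.
by rewrite mulKp // monic_neq0 ?monic_prod_XsubC.
Qed.

Lemma lead_coef_toC (f : {poly int}) : lead_coef (toC f) = (lead_coef f)%:~R.
Proof. by rewrite lead_coef_map_inj //; apply: intr_inj. Qed.

Lemma toC_monic (f : {poly int}) : (toC f \is monic) = (f \is monic).
Proof. by rewrite !monicE lead_coef_toC -(eqr_int algC). Qed.

Lemma toC_ratE (f : {poly int}) : toC f = map_poly ratr (map_poly (intr : int -> rat) f).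
Proof. by rewrite /toC -map_poly_comp; apply: eq_map_poly => z /=; rewrite ratr_int. Qed.

Lemma mgcd_toC_rat (p : {poly int}) : p != 0 ->
  exists2 g : {poly rat}, g \is monic & mgcd (toC p) (toC p)^`() = map_poly ratr g.
Proof.
move=> p0; set pQ := map_poly (intr : int -> rat) p; set g := gcdp pQ pQ^`().
have pQ0 : pQ != 0.
  by rewrite -lead_coef_eq0 lead_coef_map_inj ?intr_eq0 ?lead_coef_eq0 //; apply: intr_inj.
exists ((lead_coef g)^-1 *: g).
  by rewrite monicE lead_coefZ mulVf // lead_coef_eq0 gcdp_eq0 negb_and pQ0.
by rewrite /mgcd toC_ratE deriv_map -gcdp_map lead_coef_map map_polyZ fmorphV.
Qed.

Lemma rat_monic_cofactor_int (g : {poly rat}) (q : {poly int}) (F : {poly algC}) :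
  g \is monic -> toC q = map_poly ratr g * F -> exists f : {poly int}, toC f = F.
Proof.
move=> /monicP g_monic Dq.
have /dvdpP_rat_int[g1 [a _ Dg] [r Dqr]] : g %| map_poly intr q.
  by rewrite -(@dvdp_map _ algC ratr) -toC_ratE Dq dvdp_mulr.
have Dg' : map_poly ratr g = ratr a *: toC g1 by rewrite Dg map_polyZ toC_ratE.
have lead_g1 : ratr a * (lead_coef g1)%:~R = 1 :> algC.
  by rewrite -lead_coef_toC -lead_coefZ -Dg' lead_coef_map g_monic rmorph1.
have g1_0 : toC g1 != 0.
  rewrite -lead_coef_eq0 lead_coef_toC.
  by apply: contra_eqN lead_g1 => /eqP ->; rewrite mulr0 eq_sym oner_eq0.
have : toC g1 * toC r = toC g1 * (ratr a *: F).
  by rewrite -scalerCA -Dg' -Dq Dqr /toC rmorphM.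
move/(mulfI g1_0) => Dr; exists (lead_coef g1 *: r).
by rewrite /toC map_polyZ -/(toC r) Dr scalerA mulrC lead_g1 scale1r.
Qed.

Lemma interlacing_real (R : numDomainType) (ls ms : seq R) : interlacing ls ms ->
  all (fun z => z \is Num.real) ls -> all (fun z => z \is Num.real) ms.
Proof.
elim: ms ls => [|m ms IH] [|l [|l' ls]] //= /and3P[lm _ il] /andP[lr rls].
by rewrite -(ler_real lm) lr (IH _ il).
Qed.

Lemma real_rooted_prod_XsubC (s : seq algC) :
  all (fun z => z \is Num.real) s -> real_rooted (\prod_(z <- s) ('X - z%:P)).
Proof.
move=> /allP rs; split; first by rewrite monic_neq0 ?monic_prod_XsubC.
by move=> z; rewrite root_prod_XsubC => /rs.
Qed.

Lemma sorted_roots_prod_XsubC (s : seq algC) : all (fun z => z \is Num.real) s ->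
  sorted <=%R s -> sorted_roots (\prod_(z <- s) ('X - z%:P)) s.
Proof.
by move=> rs ss; split; [|split]; rewrite // (monicP (monic_prod_XsubC _ _ _)) scale1r.
Qed.

Lemma interlaces_prod_XsubC (ls ms : seq algC) : all (fun z => z \is Num.real) ls ->
  interlacing ls ms -> interlaces (\prod_(z <- ms) ('X - z%:P)) (\prod_(z <- ls) ('X - z%:P)).
Proof.
move=> rls il; have rms := interlacing_real il rls.
have [sls sms] := interlacing_sorted il; have /(interlacingP 0)[sz idx] := il.
do 2 (split; first exact: real_rooted_prod_XsubC).
split; first by rewrite !size_prod_XsubC sz.
exists ls, ms; do 2 (split; first exact: sorted_roots_prod_XsubC).
by move=> i /idx /andP.
Qed.

Lemma sorted_roots_monicE (p : {poly algC}) s : p \is monic -> sorted_roots p s ->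
  p = \prod_(z <- s) ('X - z%:P).
Proof. by move=> /monicP lead_p [_ [_ Dp]]; rewrite {1}Dp lead_p scale1r. Qed.

Lemma seidel_trace_monic n p : seidel_trace n p -> p \is monic.
Proof. by case=> _ [size_p [lead_p _]]; rewrite monicE lead_coefE size_p lead_p. Qed.

Theorem proposition4p2 (n : nat) (p q : {poly int}) :
  (2 <= n)%N -> seidel_trace n p -> J_set n p q ->
  exists f : {poly int},
    f \is monic /\ real_rooted (toC f) /\
    toC q = mgcd (toC p) (toC p)^`() * toC f /\
    interlaces (toC f) (Minp (toC p)).
Proof.
move=> _ /seidel_trace_monic p_monic [/seidel_trace_monic q_monic].
move=> [_ [_ [size_qp [ls [ms [roots_p [roots_q idx]]]]]]].
have p0 : p != 0 := monic_neq0 p_monic.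
rewrite -!toC_monic in p_monic q_monic.
have Dp := sorted_roots_monicE p_monic roots_p.
have Dq := sorted_roots_monicE q_monic roots_q.
have il : interlacing ls ms.
  apply/(interlacingP 0); split; last by move=> i /idx[-> ->].
  by move: size_qp; rewrite Dp Dq !size_prod_XsubC => -[].
have perm_ls := perm_pinched_undup il.
have Dq' : toC q = mgcd (toC p) (toC p)^`() * \prod_(z <- unpinched ls ms) ('X - z%:P).
  by rewrite Dq Dp (mgcd_prod_XsubC perm_ls) -big_cat; apply/perm_big/perm_pinched.
have [g g_monic Dg] := mgcd_toC_rat p0.
have [f Df] : exists f, toC f = \prod_(z <- unpinched ls ms) ('X - z%:P).
  by apply: (rat_monic_cofactor_int (q := q) g_monic); rewrite -Dg.
have real_undup : all (fun z => z \is Num.real) (undup ls) by rewrite all_undup; case: roots_p.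
have := interlaces_prod_XsubC real_undup (interlacing_undup il).
rewrite -(Minp_prod_XsubC perm_ls) -Dp => interlaces_f.
exists f; rewrite -toC_monic Df monic_prod_XsubC.
by split=> //; split; [case: interlaces_f => _ [] | split].
Qed.
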